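(* Let $(X,\oplus,\lceil,0)$ be a finite MV-algebra. Then for all $x,y\in X$ the Fibonacci sequence attached to $x,y$, namely $u_0=x$, $u_1=y$, $u_{n+2}=u_n\oplus u_{n+1}$ ($n\in\mathbb{N}$), is stationary: there exists $k\in\mathbb{N}$ such that $u_n=u_k$ for all $n\geq k$.
   Context: An MV-algebra $(X,\oplus,\lceil,0)$ is an abelian monoid $(X,\oplus,0)$ with a unary operation $\lceil$ such that for all $x,y\in X$: $x\oplus\lceil 0=\lceil 0$; $\lceil(\lceil x)=x$; $\lceil(\lceil x\oplus y)\oplus y=\lceil(\lceil y\oplus x)\oplus x$. *)

From mathcomp Require Import all_boot.
Set Implicit Arguments. Unset Strict Implicit. Unset Printing Implicit Defensive.

Definition is_MV_algebra (X : Type) (oplus : X -> X -> X) (neg : X -> X) (zero : X) : Prop :=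
  (forall x y z, oplus x (oplus y z) = oplus (oplus x y) z) /\
  (forall x y, oplus x y = oplus y x) /\
  (forall x, oplus x zero = x) /\
  (forall x, oplus x (neg zero) = neg zero) /\
  (forall x, neg (neg x) = x) /\
  (forall x y, oplus (neg (oplus (neg x) y)) y = oplus (neg (oplus (neg y) x)) x).

Fixpoint fib_pair (X : Type) (oplus : X -> X -> X) (x y : X) (n : nat) : X * X :=
  match n with
  | 0 => (x, y)
  | n'.+1 => let p := fib_pair oplus x y n' in (p.2, oplus p.1 p.2)
  end.

Definition fib_seq (X : Type) (oplus : X -> X -> X) (x y : X) (n : nat) : X :=
  (fib_pair oplus x y n).1.

From Stdlib Require Import Classical.
From mathcomp Require Import all_boot.

Set Implicit Arguments.
Unset Strict Implicit.
Unset Printing Implicit Defensive.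

(* In an MV-algebra, a <= b iff b = a (+) c for some c is a partial order;
   antisymmetry is where the MV axiom enters.  Since u_(n+2) = u_n (+) u_(n+1),
   the shifted sequence (u_(n+1)) is increasing for this order, and an increasing
   sequence in a finite poset is eventually constant: the cardinalities of its
   up-sets form a nonincreasing sequence of naturals. *)

Lemma nonincreasing_eventually_constant (f : nat -> nat) :
  (forall n, f n.+1 <= f n) -> exists k, forall n, k <= n -> f n = f k.
Proof.
suff bounded m : forall g : nat -> nat, g 0 < m -> (forall n, g n.+1 <= g n) ->
    exists k, forall n, k <= n -> g n = g k.
  by move=> f_dec; exact: (bounded (f 0).+1).
elim: m => [//|m IHm] g g0_lt g_dec.
case: (classic (exists j, g j < g 0)) => [[j gj_lt]|g0_min].
  have [k g_const] : exists k, forall n, k <= n -> g (j + n) = g (j + k).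
    apply: IHm; last by move=> n; rewrite addnS.
    by rewrite addn0 (leq_trans gj_lt) // -ltnS.
  exists (j + k) => n jk_le_n.
  have [i n_eq] : exists i, n = j + i.
    by exists (n - j); rewrite subnKC // (leq_trans (leq_addr k j)).
  by move: jk_le_n; rewrite n_eq leq_add2l; exact: g_const.
have g_homo : {homo g : i j / i <= j >-> j <= i}.
  apply: (@homo_leq _ g (fun a b => b <= a)) => // ? ? ? yx zy.
  exact: leq_trans zy yx.
exists 0 => n _; apply/eqP; rewrite eqn_leq g_homo // leqNgt.
by apply/negP => gn_lt; apply: g0_min; exists n.
Qed.

Lemma monotone_eventually_constant (T : finType) (le : rel T) (u : nat -> T) :
  reflexive le -> transitive le -> antisymmetric le ->
  (forall n, le (u n) (u n.+1)) -> exists k, forall n, k <= n -> u n = u k.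
Proof.
move=> le_refl le_trans le_anti u_incr.
have u_homo : {homo u : i j / i <= j >-> le i j} := homo_leq le_refl le_trans u_incr.
pose up n := [set z | le (u n) z].
have up_sub m n : m <= n -> up n \subset up m.
  by move=> mn; apply/subsetP => z; rewrite !inE; apply: le_trans (u_homo _ _ mn).
have [k up_card] : exists k, forall n, k <= n -> #|up n| = #|up k|.
  by apply: nonincreasing_eventually_constant => n; rewrite subset_leq_card ?up_sub.
exists k => n kn.
have up_eq : up n = up k by apply/eqP; rewrite eqEcard up_sub //= up_card.
have : u k \in up n by rewrite up_eq inE le_refl.
by rewrite inE => le_nk; apply: le_anti; rewrite le_nk u_homo.
Qed.

Section MVOrder.

Variables (X : Type) (oplus : X -> X -> X) (neg : X -> X) (zero : X).
Hypothesis mv : is_MV_algebra oplus neg zero.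

Let addA x y z : oplus x (oplus y z) = oplus (oplus x y) z.
Proof. by case: mv. Qed.

Let addC x y : oplus x y = oplus y x.
Proof. by case: mv => _ []. Qed.

Let addx0 x : oplus x zero = x.
Proof. by case: mv => _ [_ []]. Qed.

Let addx1 x : oplus x (neg zero) = neg zero.
Proof. by case: mv => _ [_ [_ []]]. Qed.

Let negK x : neg (neg x) = x.
Proof. by case: mv => _ [_ [_ [_ []]]]. Qed.

Let mv_axiom x y :
  oplus (neg (oplus (neg x) y)) y = oplus (neg (oplus (neg y) x)) x.
Proof. by case: mv => _ [_ [_ [_ []]]]. Qed.

Definition mv_le a b := exists c, b = oplus a c.

Lemma mv_le_refl a : mv_le a a.
Proof. by exists zero; rewrite addx0. Qed.

Lemma mv_le_trans a b c : mv_le a b -> mv_le b c -> mv_le a c.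
Proof. by case=> d -> [e ->]; exists (oplus d e); rewrite addA. Qed.

Lemma mv_addNr a : oplus (neg a) a = neg zero.
Proof.
by have := mv_axiom a (neg zero); rewrite !addx1 negK [oplus zero a]addC addx0.
Qed.

Lemma mv_le_addN a b : mv_le a b -> oplus (neg a) b = neg zero.
Proof. by case=> c ->; rewrite addA mv_addNr addC addx1. Qed.

Lemma mv_le_anti a b : mv_le a b -> mv_le b a -> a = b.
Proof.
move=> /mv_le_addN ab /mv_le_addN ba.
by have := mv_axiom a b; rewrite ab ba negK ![oplus zero _]addC !addx0.
Qed.

Lemma fib_seq_le_next x y n :
  mv_le (fib_seq oplus x y n.+1) (fib_seq oplus x y n.+2).
Proof. by exists (fib_seq oplus x y n); rewrite addC. Qed.

End MVOrder.

Theorem proposition2p6 (X : finType) (oplus : X -> X -> X) (neg : X -> X) (zero : X) :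
  is_MV_algebra oplus neg zero ->
  forall x y : X, exists k : nat, forall n : nat, k <= n ->
    fib_seq oplus x y n = fib_seq oplus x y k.
Proof.
move=> mv x y.
pose le a b := [exists c, b == oplus a c].
have leP a b : reflect (mv_le oplus a b) (le a b).
  by apply: (iffP existsP) => [[c /eqP]|[c ->]]; exists c.
have [k fib_const] : exists k, forall n, k <= n ->
    fib_seq oplus x y n.+1 = fib_seq oplus x y k.+1.
  apply: (@monotone_eventually_constant _ le).
  - by move=> a; apply/leP; exact: mv_le_refl mv a.
  - by move=> b a c /leP ab /leP bc; apply/leP; exact: (mv_le_trans mv ab bc).
  - by move=> a b /andP [/leP ab /leP ba]; exact: (mv_le_anti mv ab ba).
  - by move=> n; apply/leP; exact: fib_seq_le_next mv x y n.
exists k.+1; case=> [//|n]; rewrite ltnS; exact: fib_const.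
Qed.
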